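(* Let $K$ be a totally ordered quasi-field of characteristic $1$ and let $P,Q\in K\{X_1,\dots,X_n\}$. If there exists an integer $m>0$ with $P^m=Q^m$, then $P=Q$.
   Context: A quasi-field of characteristic $1$ is a commutative semiring $K$ with $1+1=1$ in which every nonzero element is multiplicatively invertible; ordered by $u\le v$ iff $u+v=v$, totally ordered meaning the order is total. $K\{X_1,\dots,X_n\}$ is the image of $K[X_1,\dots,X_n]$ in its quasi-field of fractions, i.e. the quotient by $P\sim Q$ iff $RP=RQ$ for some nonzero $R$; it is a cancellative commutative semiring of characteristic $1$. *)

(* Multivariate polynomials are not in the library, so we
   build K[X_1..X_n] by hand: a polynomial is a finite list of terms
   (monomial, coefficient); its value is its coefficient function. *)
From HB Require Import structures.
From mathcomp Require Import all_boot all_order all_algebra.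
Set Implicit Arguments. Unset Strict Implicit. Unset Printing Implicit Defensive.
Import GRing.Theory.
Local Open Scope ring_scope.

Definition char1 (K : comNzSemiRingType) : Prop := (1 + 1 : K) = 1.
Definition quasi_field (K : comNzSemiRingType) : Prop :=
  forall x : K, x <> 0 -> exists y : K, x * y = 1.
Definition qle (K : comNzSemiRingType) (u v : K) : Prop := u + v = v.
Definition totally_ordered (K : comNzSemiRingType) : Prop :=
  forall u v : K, qle u v \/ qle v u.

Definition mono (n : nat) := {ffun 'I_n -> nat}.
Definition mono0 (n : nat) : mono n := [ffun _ => 0%N].
Definition monoM (n : nat) (a b : mono n) : mono n := [ffun i => (a i + b i)%N].

Definition mpoly (K : comNzSemiRingType) (n : nat) := seq (mono n * K).
Definition coef (K : comNzSemiRingType) (n : nat) (p : mpoly K n) (a : mono n) : K :=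
  \sum_(t <- p | t.1 == a) t.2.
Definition mpoly_eq (K : comNzSemiRingType) (n : nat) (p q : mpoly K n) : Prop :=
  forall a, coef p a = coef q a.
Definition mpoly_nonzero (K : comNzSemiRingType) (n : nat) (p : mpoly K n) : Prop :=
  exists a, coef p a <> 0.
Definition mpoly1 (K : comNzSemiRingType) (n : nat) : mpoly K n := [:: (mono0 n, 1)].
Definition mpolyM (K : comNzSemiRingType) (n : nat) (p q : mpoly K n) : mpoly K n :=
  [seq (monoM t.1 u.1, t.2 * u.2) | t <- p, u <- q].
Definition mpolyX (K : comNzSemiRingType) (n : nat) (p : mpoly K n) (m : nat) : mpoly K n :=
  iter m (mpolyM p) (mpoly1 K n).

(* equality in K{X_1..X_n}: P ~ Q iff R P = R Q in K[X] for some nonzero R *)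
Definition frac_eq (K : comNzSemiRingType) (n : nat) (p q : mpoly K n) : Prop :=
  exists r : mpoly K n, mpoly_nonzero r /\ mpoly_eq (mpolyM r p) (mpolyM r q).

From HB Require Import structures.
From mathcomp Require Import all_boot all_order all_algebra.
From Stdlib Require Import Setoid Morphisms.
Set Implicit Arguments. Unset Strict Implicit. Unset Printing Implicit Defensive.
Import GRing.Theory.
Local Open Scope ring_scope.

(* The argument is purely semiring-theoretic.  Write S = P + Q and m = k+1.
   In an idempotent commutative semiring, p <= q :<-> p + q = q is an order
   compatible with + and *, for which p + q is the least upper bound.
   Induction on j gives the "binomial" bound  S^j Q <= S^j P + Q^(j+1);
   for j = k, Q^(k+1) = P^(k+1) <= S^k P, hence S^k Q <= S^k P and
   S^(k+1) = S^k P + S^k Q = S^k P.  If S is nonzero we may cancel S^k, so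
   P + Q = P, and symmetrically P + Q = Q; if S = 0 then P = Q = 0.

   Then, over a quasi-field of
   characteristic 1, nonzero polynomials are closed under products, so
   frac_eq is a congruence admitting cancellation by nonzero factors; the
   order above and the argument are developed on top of it. *)

Section PolynomialRepresentation.
Variables (K : comNzSemiRingType) (n : nat).
Implicit Types (p q r s : mpoly K n) (a b c : mono n) (g : mono n -> K).

(* Pairing of a term list with a function on monomials; coefficients are the
   pairings with indicator functions, and products become iterated pairings. *)
Definition integral p g : K := \sum_(t <- p) t.2 * g t.1.

Lemma integral_cat p q g : integral (p ++ q) g = integral p g + integral q g.
Proof. by rewrite /integral big_cat. Qed.

Lemma integral_mul p q g :
  integral (mpolyM p q) g = integral p (fun b => integral q (fun c => g (monoM b c))).
Proof.
rewrite /integral /mpolyM big_allpairs_dep; apply: eq_bigr => t _.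
by rewrite mulr_sumr; apply: eq_bigr => u _; rewrite mulrA.
Qed.

Lemma integral1 g : integral (mpoly1 K n) g = g (mono0 n).
Proof. by rewrite /integral big_cons big_nil mul1r addr0. Qed.

Lemma eq_integral p g g' : g =1 g' -> integral p g = integral p g'.
Proof. by move=> e; apply: eq_bigr => t _; rewrite e. Qed.

(* Fubini for finite sums; it gives commutativity of the product. *)
Lemma integral_exchange p q (h : mono n -> mono n -> K) :
  integral p (fun b => integral q (h b)) = integral q (fun c => integral p (h^~ c)).
Proof.
rewrite /integral; under eq_bigr do rewrite mulr_sumr.
under [RHS]eq_bigr do rewrite mulr_sumr.
by rewrite exchange_big /=; apply: eq_bigr => u _; apply: eq_bigr => t _; rewrite mulrCA.
Qed.

Lemma coef_integral p a : coef p a = integral p (fun b => (b == a)%:R).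
Proof.
rewrite /coef /integral big_mkcond; apply: eq_bigr => t _.
by case: eqP; rewrite ?mulr1 ?mulr0.
Qed.

Lemma coef_cons (t : mono n * K) p a :
  coef (t :: p) a = (if t.1 == a then t.2 else 0) + coef p a.
Proof. by rewrite /coef big_cons; case: eqP; rewrite ?add0r. Qed.

(* A pairing only depends on the coefficients: collect the terms along any
   duplicate-free list of monomials containing the support. *)
Lemma integral_support p g (s : seq (mono n)) : uniq s -> {subset map fst p <= s} ->
  integral p g = \sum_(b <- s) coef p b * g b.
Proof.
move=> s_uniq; elim: p => [|t p IHp] p_s.
  by rewrite /integral big_nil big1 // => b _; rewrite /coef big_nil mul0r.
have t_s : t.1 \in s by apply: p_s; rewrite inE eqxx.
rewrite /integral big_cons -/(integral p g) IHp; last by move=> x x_p; apply: p_s; rewrite inE x_p orbT.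
under [RHS]eq_bigr => b _ do rewrite coef_cons mulrDl.
rewrite big_split /=; congr (_ + _); rewrite (bigD1_seq t.1) //= eqxx big1 ?addr0 // => b tb.
by rewrite eq_sym (negbTE tb) mul0r.
Qed.

Lemma mpoly_eqP p q : mpoly_eq p q <-> forall g, integral p g = integral q g.
Proof.
split=> [pq g | pq a]; last by rewrite !coef_integral pq.
set s := undup (map fst p ++ map fst q).
have s_uniq : uniq s by exact: undup_uniq.
rewrite !(@integral_support _ g s s_uniq); first by apply: eq_bigr => b _; rewrite pq.
all: by move=> x x_pq; rewrite mem_undup mem_cat x_pq ?orbT.
Qed.

Lemma monoMC a b : monoM a b = monoM b a.
Proof. by apply/ffunP => i; rewrite !ffunE addnC. Qed.

Lemma monoMA a b c : monoM a (monoM b c) = monoM (monoM a b) c.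
Proof. by apply/ffunP => i; rewrite !ffunE addnA. Qed.

Lemma mono0M a : monoM (mono0 n) a = a.
Proof. by apply/ffunP => i; rewrite !ffunE add0n. Qed.

Global Instance mpoly_eq_equiv : Equivalence (@mpoly_eq K n).
Proof. split; [by [] | by move=> p q pq a | by move=> p q r pq qr a; rewrite pq]. Qed.

Global Instance cat_mpoly_eq :
  Proper (@mpoly_eq K n ==> @mpoly_eq K n ==> @mpoly_eq K n) cat.
Proof.
move=> p p' /mpoly_eqP pp q q' /mpoly_eqP qq.
by apply/mpoly_eqP => g; rewrite !integral_cat pp qq.
Qed.

Global Instance mul_mpoly_eq :
  Proper (@mpoly_eq K n ==> @mpoly_eq K n ==> @mpoly_eq K n) (@mpolyM K n).
Proof.
move=> p p' /mpoly_eqP pp q q' /mpoly_eqP qq; apply/mpoly_eqP => g.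
by rewrite !integral_mul pp; apply: eq_integral => b; rewrite qq.
Qed.

Lemma mpolyXS p k : mpolyX p k.+1 = mpolyM p (mpolyX p k).
Proof. by []. Qed.

Lemma mpoly_catC p q : mpoly_eq (p ++ q) (q ++ p).
Proof. by apply/mpoly_eqP => g; rewrite !integral_cat addrC. Qed.

Lemma mpoly_mulC p q : mpoly_eq (mpolyM p q) (mpolyM q p).
Proof.
apply/mpoly_eqP => g; rewrite !integral_mul integral_exchange.
by apply: eq_integral => c; apply: eq_integral => b; rewrite monoMC.
Qed.

Lemma mpoly_mulA p q r : mpoly_eq (mpolyM p (mpolyM q r)) (mpolyM (mpolyM p q) r).
Proof.
apply/mpoly_eqP => g; rewrite !integral_mul; apply: eq_integral => b.
by rewrite integral_mul; apply: eq_integral => c; apply: eq_integral => d; rewrite monoMA.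
Qed.

Lemma mpoly_mul1 p : mpoly_eq (mpolyM (mpoly1 K n) p) p.
Proof.
apply/mpoly_eqP => g; rewrite integral_mul integral1.
by apply: eq_integral => b; rewrite mono0M.
Qed.

Lemma mpoly_mulDl p q r : mpoly_eq (mpolyM (p ++ q) r) (mpolyM p r ++ mpolyM q r).
Proof. by apply/mpoly_eqP => g; rewrite integral_cat !integral_mul integral_cat. Qed.

Lemma mpoly_mulDr p q r : mpoly_eq (mpolyM r (p ++ q)) (mpolyM r p ++ mpolyM r q).
Proof. by rewrite mpoly_mulC mpoly_mulDl !(mpoly_mulC r). Qed.

Lemma mpoly_mulCA p q r : mpoly_eq (mpolyM p (mpolyM q r)) (mpolyM q (mpolyM p r)).
Proof. by rewrite !mpoly_mulA (mpoly_mulC p q). Qed.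

Lemma mpoly_mulACA p q r s :
  mpoly_eq (mpolyM (mpolyM p q) (mpolyM r s)) (mpolyM (mpolyM p r) (mpolyM q s)).
Proof. by rewrite -!mpoly_mulA (mpoly_mulCA q r s). Qed.

End PolynomialRepresentation.

Section FractionEquality.
Variables (K : comNzSemiRingType) (n : nat).
Hypotheses (hchar : char1 K) (hqf : quasi_field K).
Implicit Types (x y : K) (p q r s : mpoly K n).

(* Characteristic 1 makes addition idempotent, hence K is zero-sum-free;
   a quasi-field has no zero divisors. *)
Lemma addrr x : x + x = x.
Proof. by rewrite -{1 2}(mulr1 x) -mulrDr hchar mulr1. Qed.

Lemma addr_eq0_l x y : x + y = 0 -> x = 0.
Proof. by move=> xy0; rewrite -[x]addr0 -xy0 addrA addrr. Qed.

Lemma mulr_eq0_r x y : x != 0 -> x * y = 0 -> y = 0.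
Proof.
move=> /eqP x0 xy0; have [z xz1] := hqf x0.
by rewrite -[y]mul1r -xz1 mulrAC xy0 mul0r.
Qed.

Lemma integral_eq0 p g : integral p g = 0 -> forall t, t \in p -> t.2 * g t.1 = 0.
Proof.
elim: p => [|u p IHp] //; rewrite /integral big_cons -/(integral p g) => up0 t.
rewrite inE => /orP [/eqP -> | t_p]; first exact: addr_eq0_l up0.
by apply: IHp; rewrite // addrC in up0; exact: addr_eq0_l up0.
Qed.

(* By zero-sum-freeness no cancellation occurs between terms: a polynomial is
   nonzero iff one of its terms has a nonzero coefficient. *)
Lemma mpoly_nonzeroP p : mpoly_nonzero p <-> has (fun t => t.2 != 0) p.
Proof.
split=> [[a pa0] | /hasP [t t_p t0]].
  apply/negPn/negP => /hasPn p0; apply: pa0.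
  by rewrite /coef big1_seq // => t /andP [_ /p0]; rewrite negbK => /eqP.
exists t.1; rewrite coef_integral => /integral_eq0 /(_ t t_p).
by rewrite eqxx mulr1 => t0'; rewrite t0' eqxx in t0.
Qed.

Lemma mpoly_eq0 p : ~~ has (fun t => t.2 != 0) p -> mpoly_eq p [::].
Proof.
move=> /hasPn p0 a; rewrite /coef big_nil big1_seq // => t /andP [_ /p0].
by rewrite negbK => /eqP.
Qed.

(* K[X_1..X_n] has no zero divisors: the product of two nonzero terms
   contributes a nonzero summand to some coefficient of the product. *)
Lemma mpoly_nonzeroM r s :
  mpoly_nonzero r -> mpoly_nonzero s -> mpoly_nonzero (mpolyM r s).
Proof.
move=> /mpoly_nonzeroP/hasP [t t_r t0] /mpoly_nonzeroP/hasP [u u_s u0].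
exists (monoM t.1 u.1); rewrite coef_integral integral_mul => /integral_eq0 /(_ t t_r).
move=> /(mulr_eq0_r t0) /integral_eq0 /(_ u u_s).
by rewrite eqxx mulr1 => u0'; rewrite u0' eqxx in u0.
Qed.

Lemma mpoly_nonzero1 : mpoly_nonzero (mpoly1 K n).
Proof. by apply/mpoly_nonzeroP; rewrite /= oner_neq0. Qed.

Lemma mpoly_nonzeroX p k : mpoly_nonzero p -> mpoly_nonzero (mpolyX p k).
Proof.
by move=> p0; elim: k => [|k IHk]; [exact: mpoly_nonzero1 | exact: mpoly_nonzeroM].
Qed.

Global Instance frac_eq_equiv : Equivalence (@frac_eq K n).
Proof.
split.
- by move=> p; exists (mpoly1 K n); split; [exact: mpoly_nonzero1 | reflexivity].
- by move=> p q [r [r0 rpq]]; exists r; split.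
move=> p q s [r1 [r10 pq]] [r2 [r20 qs]]; exists (mpolyM r1 r2).
split; first exact: mpoly_nonzeroM.
by rewrite -!mpoly_mulA -qs mpoly_mulCA pq mpoly_mulCA.
Qed.

Global Instance mpoly_eq_frac_eq : subrelation (@mpoly_eq K n) (@frac_eq K n).
Proof.
by move=> p q pq; exists (mpoly1 K n); split; [exact: mpoly_nonzero1 | rewrite pq].
Qed.

Global Instance cat_frac_eq :
  Proper (@frac_eq K n ==> @frac_eq K n ==> @frac_eq K n) cat.
Proof.
move=> p p' [r1 [r10 pp]] q q' [r2 [r20 qq]]; exists (mpolyM r1 r2).
split; first exact: mpoly_nonzeroM.
by rewrite !mpoly_mulDr -!mpoly_mulA (mpoly_mulCA r1 r2 p) (mpoly_mulCA r1 r2 p') pp qq.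
Qed.

Global Instance mul_frac_eq :
  Proper (@frac_eq K n ==> @frac_eq K n ==> @frac_eq K n) (@mpolyM K n).
Proof.
move=> p p' [r1 [r10 pp]] q q' [r2 [r20 qq]]; exists (mpolyM r1 r2).
split; first exact: mpoly_nonzeroM.
by rewrite mpoly_mulACA (mpoly_mulACA r1 r2 p') pp qq.
Qed.

Lemma frac_eq_cancel r p q :
  mpoly_nonzero r -> frac_eq (mpolyM r p) (mpolyM r q) -> frac_eq p q.
Proof.
move=> r0 [s [s0 rpq]]; exists (mpolyM s r).
by split; [exact: mpoly_nonzeroM | rewrite -!mpoly_mulA].
Qed.

Definition frac_le p q : Prop := frac_eq (p ++ q) q.

Global Instance frac_le_proper :
  Proper (@frac_eq K n ==> @frac_eq K n ==> iff) frac_le.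
Proof. by move=> p p' pp q q' qq; rewrite /frac_le pp qq. Qed.

Lemma mpoly_catI p : mpoly_eq (p ++ p) p.
Proof. by apply/mpoly_eqP => g; rewrite integral_cat addrr. Qed.

Lemma frac_le_refl p : frac_le p p.
Proof. by rewrite /frac_le mpoly_catI; reflexivity. Qed.

Lemma frac_le_trans q p r : frac_le p q -> frac_le q r -> frac_le p r.
Proof. by rewrite /frac_le => pq qr; rewrite -qr catA pq; reflexivity. Qed.

Lemma frac_le_antisym p q : frac_le p q -> frac_le q p -> frac_eq p q.
Proof. by rewrite /frac_le => pq qp; rewrite -qp mpoly_catC. Qed.

Lemma frac_le_catl p q : frac_le p (p ++ q).
Proof. by rewrite /frac_le catA mpoly_catI; reflexivity. Qed.

Lemma frac_le_catr p q : frac_le q (p ++ q).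
Proof. by rewrite /frac_le catA (mpoly_catC q p) -catA mpoly_catI; reflexivity. Qed.

Lemma frac_le_cat p q r : frac_le p r -> frac_le q r -> frac_le (p ++ q) r.
Proof. by rewrite /frac_le => pr qr; rewrite -catA qr pr; reflexivity. Qed.

Lemma frac_le_mull r p q : frac_le p q -> frac_le (mpolyM r p) (mpolyM r q).
Proof. by rewrite /frac_le => pq; rewrite -mpoly_mulDr pq; reflexivity. Qed.

Lemma frac_le_mulr r p q : frac_le p q -> frac_le (mpolyM p r) (mpolyM q r).
Proof. by move=> pq; rewrite !(mpoly_mulC _ r); exact: frac_le_mull. Qed.

Lemma frac_le_X p q k : frac_le p q -> frac_le (mpolyX p k) (mpolyX q k).
Proof.
move=> pq; elim: k => [|k IHk]; first exact: frac_le_refl.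
exact: frac_le_trans (frac_le_mull _ IHk) (frac_le_mulr _ pq).
Qed.

(* The binomial bound (p + q)^j q <= (p + q)^j p + q^(j+1): every monomial
   p^i q^(j+1-i) with i >= 1 is dominated by (p + q)^j p. *)
Lemma frac_le_binomial p q j :
  frac_le (mpolyM (mpolyX (p ++ q) j) q) (mpolyM (mpolyX (p ++ q) j) p ++ mpolyX q j.+1).
Proof.
elim: j => [|j IHj].
  by rewrite !mpoly_mul1 mpolyXS (mpoly_mulC q) mpoly_mul1; exact: frac_le_catr.
have qS : frac_le (mpolyX q j.+1) (mpolyX (p ++ q) j.+1) by exact/frac_le_X/frac_le_catr.
rewrite mpolyXS -mpoly_mulA; apply: frac_le_trans (frac_le_mull _ IHj) _.
rewrite mpoly_mulDr mpoly_mulA -mpolyXS mpoly_mulDl -mpolyXS.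
apply: frac_le_cat; first exact: frac_le_catl.
apply: frac_le_cat; last exact: frac_le_catr.
apply: frac_le_trans (frac_le_catl _ _).
by rewrite mpoly_mulC; exact: frac_le_mulr.
Qed.

(* If p^(k+1) = q^(k+1) then (p + q)^k q <= (p + q)^k p, so
   (p + q)^(k+1) = (p + q)^k p, and cancelling (p + q)^k gives p + q = p. *)
Lemma frac_eq_root_catl p q k :
  frac_eq (mpolyX p k.+1) (mpolyX q k.+1) -> mpoly_nonzero (p ++ q) ->
  frac_eq (p ++ q) p.
Proof.
move=> pq pq0.
have le_qp : frac_le (mpolyM (mpolyX (p ++ q) k) q) (mpolyM (mpolyX (p ++ q) k) p).
  apply: frac_le_trans (frac_le_binomial p q k) _.
  apply: frac_le_cat (frac_le_refl _) _.
  rewrite -pq mpolyXS mpoly_mulC.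
  exact/frac_le_mulr/frac_le_X/frac_le_catl.
apply: (frac_eq_cancel (mpoly_nonzeroX k pq0)); rewrite mpoly_mulDr.
apply: frac_le_antisym; first exact: frac_le_cat (frac_le_refl _) le_qp.
exact: frac_le_catl.
Qed.

(* Uniqueness of (k+1)-th roots: p = p + q = q + p = q, unless p + q = 0. *)
Lemma frac_eq_root p q k :
  frac_eq (mpolyX p k.+1) (mpolyX q k.+1) -> frac_eq p q.
Proof.
move=> pq; have [pq0 | pq0] := boolP (has (fun t => t.2 != 0) (p ++ q)).
  have qp0 : mpoly_nonzero (q ++ p).
    by apply/mpoly_nonzeroP; rewrite has_cat orbC -has_cat.
  move/mpoly_nonzeroP: pq0 => pq0.
  rewrite -(frac_eq_root_catl pq pq0) mpoly_catC.
  by rewrite (frac_eq_root_catl (symmetry pq) qp0); reflexivity.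
move: pq0; rewrite has_cat negb_or => /andP [/mpoly_eq0 p0 /mpoly_eq0 q0].
by rewrite p0 q0; reflexivity.
Qed.

End FractionEquality.

Theorem lemma3p9 (K : comNzSemiRingType) (n : nat)
  (hchar : char1 K) (hqf : quasi_field K) (htot : totally_ordered K)
  (P Q : mpoly K n) (m : nat) (hm : (0 < m)%N)
  (hPQ : frac_eq (mpolyX P m) (mpolyX Q m)) :
  frac_eq P Q.
Proof. by case: m hm hPQ => [//|k] _; exact: frac_eq_root. Qed.
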